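(* Let $I$ be an ESP instance, let $0<\varepsilon\le1$ and $\beta\ge1$, let $\sigma^*$ be an optimal feasible pattern for $I$ and $\sigma_\beta$ a feasible pattern with $L(\sigma_\beta)\le\beta L(\sigma^* )$. Set $\gamma=3/\varepsilon$, $a=\beta\gamma/\varepsilon$, and let $b$ be chosen uniformly at random in $[0,a]$. Define $t_i=e^{(i-2)a+b}$ for $i=1,2,\dots$, let $q$ be the smallest integer such that $L_v(\sigma_\beta)<t_{q+1}$ for all vertices $v$ visited by $\sigma_\beta$, and for $i\in[q]$ let $V_i=\{v \text{ visited by }\sigma_\beta: t_i\le L_v(\sigma_\beta)<t_{i+1}\}$ and $V_i^*=V_i\cap V^*$. For $i\in[q]$ let $I_i$ be the instance obtained from $I$ by setting the weights of all vertices outside $V_i$ to $0$, with objective $C'_i(\sigma)=\sum_{v\in V_i^*}w_v(\gamma t_i+L_v(\sigma))$ over patterns $\sigma$ feasible for $I_i$, and let $\sigma_i^*$ minimize $C'_i$. Then $$\mathbb{E}\Bigl[\sum_{i\in[q]}C'_i(\sigma_i^* )\Bigr]\le(1+\varepsilon)\,L(\sigma^* ),$$ where the expectation is over $b$.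
   Context: ESP: connected undirected graph $G=(V,E)$, root $r$, nonnegative edge lengths $\ell_e$, nonnegative integer weights $w_v$, $V^*=\{v:w_v>0\}$. An expanding search pattern is a sequence $\sigma=(e_1,\dots,e_m)$ of edges with $r\in e_1$ such that $\{e_1,\dots,e_i\}$ is a tree for every $i$; a vertex is visited by $\sigma$ if it is $r$ or an endpoint of some $e_i$; $\sigma$ is feasible (for an instance) if it visits all positive-weight vertices of that instance. For a visited $v\ne r$, $k_v=\min\{i:v\in e_i\}$, $k_r=0$, latency $L_v(\sigma)=\sum_{i\le k_v}\ell_{e_i}$; total latency $L(\sigma)=\sum_{v\in V^*}w_vL_v(\sigma)$. *)

From HB Require Import structures.
From mathcomp Require Import all_boot all_order all_algebra.
From mathcomp Require Import all_classical all_reals all_analysis.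
Set Implicit Arguments. Unset Strict Implicit. Unset Printing Implicit Defensive.
Import Order.TTheory GRing.Theory Num.Theory.
Local Open Scope ring_scope.

(* A (multi)graph: finite vertex type V, finite edge type E, each edge e has
   endpoints ends e (an unordered pair, stored as an ordered pair). *)
Section ESP.
Variables (R : realType) (V E : finType) (ends : E -> V * V).

Definition incident (e : E) (v : V) : bool :=
  (v == (ends e).1) || (v == (ends e).2).

Definition adj_in (F : {set E}) : rel V :=
  fun x y => [exists e in F, (ends e == (x, y)) || (ends e == (y, x))].

Definition span_of (F : {set E}) : {set V} :=
  [set v | [exists e in F, incident e v]].

Definition is_tree (F : {set E}) : bool :=
  [forall u in span_of F, forall v in span_of F, connect (adj_in F) u v]
  && (#|F|.+1 == #|span_of F|).

Definition connected_graph : Prop := forall u v : V, connect (adj_in [set: E]%SET) u v.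

Definition is_pattern (r : V) (s : seq E) : Prop :=
  (match s with [::] => True | e1 :: _ => incident e1 r end) /\
  (forall i : nat, (0 < i <= size s)%N -> is_tree [set e in take i s]).

Definition visited (r : V) (s : seq E) (v : V) : bool :=
  (v == r) || has (fun e => incident e v) s.

(* L_v(s) = sum of lengths of e_1..e_{k_v}, k_v first index (1-based) of an
   edge containing v; L_r = 0 *)
Definition latency (l : E -> R) (r : V) (s : seq E) (v : V) : R :=
  if v == r then 0
  else \sum_(e <- take (find (fun e => incident e v) s).+1 s) l e.

Definition total_latency (l : E -> R) (w : V -> nat) (r : V) (s : seq E) : R :=
  \sum_(v | (0 < w v)%N) (w v)%:R * latency l r s v.

Definition feasible (w : V -> nat) (r : V) (s : seq E) : Prop :=
  is_pattern r s /\ forall v, (0 < w v)%N -> visited r s v.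

Definition tpt (a b : R) (i : nat) : R := expR ((i%:R - 2) * a + b).

Definition in_layer (l : E -> R) (r : V) (sb : seq E) (a b : R) (i : nat)
  (v : V) : bool :=
  [&& visited r sb v, tpt a b i <= latency l r sb v
    & latency l r sb v < tpt a b i.+1].

Definition layer_weights (l : E -> R) (w : V -> nat) (r : V) (sb : seq E)
  (a b : R) (i : nat) : V -> nat :=
  fun v => if in_layer l r sb a b i v then w v else 0%N.

Definition layer_cost (l : E -> R) (w : V -> nat) (r : V) (sb : seq E)
  (gamma a b : R) (i : nat) (s : seq E) : R :=
  \sum_(v | in_layer l r sb a b i v && (0 < w v)%N)
     (w v)%:R * (gamma * tpt a b i + latency l r s v).

End ESP.

From HB Require Import structures.
From mathcomp Require Import all_boot all_order all_algebra.
From mathcomp Require Import all_classical all_reals all_analysis.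
From mathcomp Require Import ring lra measurable_realfun.
Import Order.TTheory GRing.Theory Num.Theory numFieldNormedType.Exports.
Local Open Scope ring_scope.

(* Since sstar is feasible for every layer instance I_i, the optimum of
   C'_i is at most C'_i(sstar); summing over the layers, each vertex v of
   positive weight is charged w_v (L_v(sstar) + gamma t_i), where t_i is the
   start of its layer, i.e. the largest point of the grid {e^(n a + b) : n in Z}
   not exceeding L_v(sbeta) ([grid_floor]).  On [0, a] this grid point is
   e^(k a + b), resp. e^((k - 1) a + b), on the two sides of a breakpoint, and
   its integral over b is at most L_v(sbeta).  Hence the expectation is at most
   L(sstar) + (gamma / a) L(sbeta) = L(sstar) + (eps / beta) L(sbeta)
   <= (1 + eps) L(sstar). *)

Section grid_floor.
Context {R : realType}.
Local Notation mu := (@lebesgue_measure R).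
Local Open Scope classical_set_scope.

Lemma integral_scaled_expR (c u v : R) : u <= v ->
  (\int[mu]_(x in `[u, v]) (c * expR x)%:E = (c * (expR v - expR u))%:E)%E.
Proof.
rewrite le_eqVlt => /predU1P[<-|uv]; first by rewrite set_itv1 integral_set1 subrr mulr0.
have expR_cont : continuous (fun x : R => c * expR x).
  by move=> x; apply: cvgM; [exact: cvg_cst|exact: continuous_expR].
rewrite mulrBr EFinB (continuous_FTC2 (F := fun x => c * expR x)) //.
- exact/continuous_subspaceT.
- split; first by move=> x _; exact: ex_derive.
  + exact/cvg_at_right_filter/expR_cont.
  + exact/cvg_at_left_filter/expR_cont.
- by move=> x _; rewrite derive1E derive_val.
Qed.

Definition grid_floor (a b x : R) : R :=
  if 0 < x then expR ((Num.floor ((ln x - b) / a))%:~R * a + b) else 0.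

Lemma grid_floor_ge0 a b x : 0 <= grid_floor a b x.
Proof. by rewrite /grid_floor; case: ifP => // _; exact: expR_ge0. Qed.

Lemma le_grid_floor a b x (n : int) : 0 < a ->
  expR (n%:~R * a + b) <= x -> expR (n%:~R * a + b) <= grid_floor a b x.
Proof.
move=> a_gt0 nx; have x_gt0 : 0 < x := lt_le_trans (expR_gt0 _) nx.
rewrite /grid_floor x_gt0 ler_expR lerD2r ler_pM2r // ler_int floor_ge_int.
by rewrite ler_pdivlMr // lerBrDr -ler_expR (lnK x_gt0).
Qed.

Lemma measurable_grid_floor (a x : R) : 0 < a ->
  measurable_fun setT (fun b => grid_floor a b x).
Proof.
move=> a_gt0; rewrite /grid_floor; case: (0 < x); last exact: measurable_cst.
apply: measurableT_comp; first exact: measurable_expR.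
apply: measurable_funD => //; apply: measurable_funM => //.
apply: nonincreasing_measurable => // s t st.
by rewrite ler_int le_floor // ler_pM2r ?invr_gt0 // lerB.
Qed.

Lemma grid_floorE (a b x : R) (k : int) : 0 < a -> 0 < x ->
  k%:~R * a <= ln x - b < (k + 1)%:~R * a ->
  grid_floor a b x = expR (k%:~R * a) * expR b.
Proof.
move=> a_gt0 x_gt0 kab; rewrite /grid_floor x_gt0 -expRD (floor_def (m := k)) //.
by rewrite ler_pdivlMr // ltr_pdivrMr.
Qed.

Lemma integral_grid_floor_le (a x : R) : 0 < a -> 0 <= x ->
  (\int[mu]_(b in `[0%R, a]) (grid_floor a b x)%:E <= x%:E)%E.
Proof.
move=> a_gt0; rewrite le_eqVlt => /predU1P[<-|x_gt0].
  by under eq_integral do rewrite /grid_floor ltxx; rewrite integral0.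
set k := Num.floor (ln x / a); set r := ln x - k%:~R * a.
have lnxE : ln x = k%:~R * a + r by rewrite /r addrC subrK.
have /andP[r_ge0 r_lta] : 0 <= r < a.
  have /andP[] := floor_itv (ln x / a); rewrite -/k intrD.
  by rewrite ler_pdivlMr // ltr_pdivrMr // lnxE; lra.
have lowE : {in `[0, r], forall b,
    grid_floor a b x = expR (k%:~R * a) * expR b}.
  move=> b; rewrite inE /= in_itv /= => /andP[b_ge0 b_ler].
  by apply: grid_floorE => //; rewrite lnxE intrD; lra.
have highE : {in `]r, a], forall b,
    grid_floor a b x = expR ((k - 1)%:~R * a) * expR b}.
  move=> b; rewrite inE /= in_itv /= => /andP[b_gtr b_lea].
  by apply: grid_floorE => //; rewrite lnxE subrK intrB; lra.
rewrite (@itv_bndbnd_setU _ _ _ (BRight r)) ?bnd_simp ?r_ge0 ?(ltW r_lta) //.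
rewrite integral_setU //; first last.
- rewrite /disj_set; apply/eqP/seteqP; split => b //=.
  by rewrite !in_itv /= => -[/andP[_ ?] /andP[? _]]; lra.
- apply/measurable_EFinP; apply: (measurable_funS measurableT) => //; exact: measurable_grid_floor.
under [X in (X + _)%E]eq_integral => b /lowE -> do [].
under [X in (_ + X)%E]eq_integral => b /highE -> do [].
rewrite integral_itv_obnd_cbnd; last first.
  apply/measurable_EFinP; apply: (measurable_funS measurableT) => //.
  by apply: measurable_funM => //; exact: measurable_expR.
rewrite (integral_scaled_expR _ _ _ r_ge0) (integral_scaled_expR _ _ _ (ltW r_lta)).
rewrite -EFinD lee_fin expR0 !mulrBr -!expRD mulr1 -lnxE lnK ?posrE //.
have -> : (k - 1)%:~R * a + a = k%:~R * a by rewrite intrB mulrBl mul1r subrK.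
by have := expR_ge0 ((k - 1)%:~R * a + r); lra.
Qed.

Lemma integral_affine_grid_floor_le (T : finType) (a c g : R) (k x : T -> R) :
  0 < a -> 0 <= c -> 0 <= g -> (forall t, 0 <= k t) -> (forall t, 0 <= x t) ->
  (\int[mu]_(b in `[0%R, a]) (c + g * \sum_t k t * grid_floor a b (x t))%:E
   <= (c * a + g * \sum_t k t * x t)%:E)%E.
Proof.
move=> a_gt0 c_ge0 g_ge0 k_ge0 x_ge0.
have mfloor t : measurable_fun `[0%R, a] (fun b => (grid_floor a b (x t))%:E).
  apply/measurable_EFinP; apply: (measurable_funS measurableT) => //.
  exact: measurable_grid_floor.
pose term t b := ((k t)%:E * (grid_floor a b (x t))%:E)%E.
have mterm t : measurable_fun `[0%R, a] (term t) by exact: measurable_funeM.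
have term_ge0 t b : (0 <= term t b)%E.
  by rewrite /term -EFinM lee_fin mulr_ge0 ?grid_floor_ge0.
have msum : measurable_fun `[0%R, a] (fun b => \sum_t term t b)%E.
  exact: emeasurable_sum.
have sum_ge0 b : (0 <= \sum_t term t b)%E by exact: sume_ge0.
under eq_integral do rewrite EFinD EFinM -sumEFin (eq_bigr _ (fun t _ => EFinM _ _)).
rewrite ge0_integralD //; last 2 first.
- by move=> b _; apply: mule_ge0; [rewrite lee_fin | exact: sum_ge0].
- exact: measurable_funeM.
rewrite integral_cst //= lebesgue_measure_itv /= lte_fin a_gt0 -EFinB subr0.
rewrite ge0_integralZl_EFin //; last by move=> b _; exact: sum_ge0.
rewrite (ge0_integral_sum mu _ mterm (fun t b _ => term_ge0 t b)) // EFinD !EFinM.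
rewrite leeD2l // lee_wpmul2l ?lee_fin // -sumEFin lee_sum // => t _.
have floor_ge0 b : `[0%R, a] b -> (0 <= (grid_floor a b (x t))%:E)%E.
  by rewrite lee_fin grid_floor_ge0.
rewrite (ge0_integralZl_EFin mu _ floor_ge0 (mfloor t)) // EFinM.
by rewrite lee_wpmul2l ?lee_fin // integral_grid_floor_le.
Qed.

End grid_floor.

(* Unlike [ge0_le_integral], no measurability is required: the integrand of the
   theorem depends on the arbitrary functions [q] and [sopt]. *)
Lemma ge0_le_integral_nonmeasurable d (T : measurableType d) (R : realType)
    (mu : {measure set T -> \bar R}) (D : set T) (f g : T -> \bar R) :
  (forall x, D x -> (0 <= f x)%E) -> (forall x, D x -> (f x <= g x)%E) ->
  (\int[mu]_(x in D) f x <= \int[mu]_(x in D) g x)%E.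
Proof.
move=> f_ge0 fg.
have g_ge0 x : D x -> (0 <= g x)%E by move=> Dx; exact: le_trans (f_ge0 x Dx) (fg x Dx).
rewrite (ge0_integralE mu f_ge0) (ge0_integralE mu g_ge0).
apply: ereal_sup_le => _ [h hf <-]; exists h => // x.
apply: le_trans (hf x) _; rewrite /patch; case: ifP => // /set_mem Dx.
exact: fg.
Qed.

Lemma sum_single_le (R : numDomainType) (I : eqType) (s : seq I) (P : pred I)
    (F : I -> R) (M : R) :
  uniq s -> (forall i j, P i -> P j -> i = j) -> (forall i, P i -> F i <= M) ->
  0 <= M -> \sum_(i <- s | P i) F i <= M.
Proof.
move=> s_uniq P_single FM M_ge0.
have [/hasP[i si Pi] | /hasPn noP] := boolP (has P s).
  rewrite -big_filter (bigD1_seq i) ?mem_filter ?Pi ?filter_uniq //=.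
  rewrite big1_seq ?addr0 ?FM // => j /andP[ji]; rewrite mem_filter => /andP[Pj _].
  by rewrite (P_single _ _ Pj Pi) eqxx in ji.
by rewrite big1_seq // => i /andP[Pi /noP]; rewrite Pi.
Qed.

Lemma feasibleW {V E : finType} {ends : E -> V * V} {r : V} {w w' : V -> nat}
    {s : seq E} :
  (forall v, (0 < w' v)%N -> (0 < w v)%N) ->
  feasible ends w r s -> feasible ends w' r s.
Proof. by move=> ww' [s_pat s_vis]; split=> // v /ww'; exact: s_vis. Qed.

Section layers.
Context {R : realType} {V E : finType} {ends : E -> V * V} {r : V}.
Context {l : E -> R} {w : V -> nat}.
Hypothesis l_ge0 : forall e, 0 <= l e.

Lemma latency_ge0 s v : 0 <= latency ends l r s v.
Proof. by rewrite /latency; case: ifP => // _; exact: sumr_ge0. Qed.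

Lemma sum_weight_gt0 (f : V -> R) :
  \sum_(v | (0 < w v)%N) (w v)%:R * f v = \sum_v (w v)%:R * f v.
Proof.
rewrite [RHS](bigID (fun v => (0 < w v)%N)) /= [X in _ + X]big1 ?addr0 //.
by move=> v; rewrite lt0n negbK => /eqP ->; rewrite mul0r.
Qed.

Context {sb : seq E} {a b : R}.

Lemma layer_cost_ge0 gamma i s : 0 <= gamma ->
  0 <= layer_cost ends l w r sb gamma a b i s.
Proof.
move=> gamma_ge0; apply: sumr_ge0 => v _.
by rewrite mulr_ge0 ?addr_ge0 ?mulr_ge0 ?latency_ge0 ?expR_ge0.
Qed.

Hypothesis a_gt0 : 0 < a.

Lemma le_tpt : {homo tpt a b : i j / (i <= j)%N >-> i <= j}.
Proof. by move=> i j ij; rewrite ler_expR lerD2r ler_pM2r // lerD2r ler_nat. Qed.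

Lemma in_layer_uniq v i j :
  in_layer ends l r sb a b i v -> in_layer ends l r sb a b j v -> i = j.
Proof.
move=> /and3P[_ ti ti1] /and3P[_ tj tj1].
case: (ltngtP i j) => // [ij | ji].
- by have := lt_le_trans ti1 (le_trans (le_tpt _ _ ij) tj); rewrite ltxx.
- by have := lt_le_trans tj1 (le_trans (le_tpt _ _ ji) ti); rewrite ltxx.
Qed.

Lemma tpt_le_grid_floor i v : in_layer ends l r sb a b i v ->
  tpt a b i <= grid_floor a b (latency ends l r sb v).
Proof.
move=> /and3P[_ ti _]; move: ti; rewrite /tpt.
have -> : (i%:R - 2 : R) = (i%:Z - 2)%:~R by rewrite intrB.
exact: le_grid_floor.
Qed.

Lemma sum_layer_cost_le gamma s m n : 0 <= gamma ->
  \sum_(m <= i < n) layer_cost ends l w r sb gamma a b i s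
  <= total_latency ends l w r s
     + gamma * \sum_v (w v)%:R * grid_floor a b (latency ends l r sb v).
Proof.
move=> gamma_ge0; rewrite /layer_cost (exchange_big_dep (fun v => 0 < w v)%N) /=.
  2: by move=> i v _ /andP[].
rewrite /total_latency -sum_weight_gt0 mulr_sumr -big_split /=.
apply: ler_sum => v w_gt0; apply: sum_single_le.
- exact: iota_uniq.
- by move=> i j /andP[/in_layer_uniq iv _] /andP[/iv].
- move=> i /andP[/tpt_le_grid_floor ti _].
  by rewrite mulrDr [leRHS]addrC lerD2r mulrCA ler_wpM2l // ler_wpM2l.
- by rewrite addr_ge0 ?mulr_ge0 ?latency_ge0 ?grid_floor_ge0.
Qed.

End layers.

Lemma mean_cost_le (R : realFieldType) (eps beta gamma x y : R) :
  0 < eps -> 0 < beta -> 0 < gamma -> y <= beta * x ->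
  (beta * gamma / eps)^-1 * (x * (beta * gamma / eps) + gamma * y) <= (1 + eps) * x.
Proof.
move=> eps_gt0 beta_gt0 gamma_gt0 yx.
have -> : (beta * gamma / eps)^-1 * (x * (beta * gamma / eps) + gamma * y)
    = x + eps / beta * y by field; rewrite !gt_eqF.
have : eps / beta * y <= eps * x.
  rewrite -[X in _ <= X * _](divfK (lt0r_neq0 beta_gt0)) -[leRHS]mulrA.
  by rewrite ler_wpM2l // divr_ge0 ?ltW.
lra.
Qed.

Theorem lemma9 (R : realType) (V E : finType) (ends : E -> V * V) (r : V)
  (l : E -> R) (w : V -> nat) (eps beta : R) (sstar sbeta : seq E)
  (q : R -> nat) (sopt : R -> nat -> seq E) :
  connected_graph ends ->
  (forall e, 0 <= l e) ->
  0 < eps <= 1 -> 1 <= beta ->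
  feasible ends w r sstar ->
  (forall s, feasible ends w r s ->
     total_latency ends l w r sstar <= total_latency ends l w r s) ->
  feasible ends w r sbeta ->
  total_latency ends l w r sbeta <= beta * total_latency ends l w r sstar ->
  let gamma := 3 / eps in
  let a := beta * gamma / eps in
  (* q b = smallest natural q with L_v(sbeta) < t_{q+1} for all visited v *)
  (forall b : R,
     (forall v, visited ends r sbeta v -> latency ends l r sbeta v < tpt a b (q b).+1)
     /\ (forall n : nat,
          (forall v, visited ends r sbeta v -> latency ends l r sbeta v < tpt a b n.+1) ->
          (q b <= n)%N)) ->
  (* sopt b i = an optimal solution sigma_i^* of I_i w.r.t. C'_i *)
  (forall (b : R) (i : nat), (1 <= i <= q b)%N ->
     feasible ends (layer_weights ends l w r sbeta a b i) r (sopt b i) /\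
     (forall s, feasible ends (layer_weights ends l w r sbeta a b i) r s ->
        layer_cost ends l w r sbeta gamma a b i (sopt b i)
        <= layer_cost ends l w r sbeta gamma a b i s)) ->
  ((a^-1)%:E *
     \int[lebesgue_measure]_(b in `[0%R, a]%classic)
        (\sum_(1 <= i < (q b).+1)
            layer_cost ends l w r sbeta gamma a b i (sopt b i))%:E
   <= ((1 + eps) * total_latency ends l w r sstar)%:E)%E.
Proof.
move=> _ l_ge0 /andP[eps_gt0 _] beta_ge1 fstar _ _ Lbeta gamma a _ sopt_opt.
set Ls := total_latency ends l w r sstar.
set Lb := total_latency ends l w r sbeta.
have beta_gt0 : 0 < beta := lt_le_trans ltr01 beta_ge1.
have gamma_gt0 : 0 < gamma by rewrite divr_gt0.
have a_gt0 : 0 < a by rewrite !divr_gt0 // mulr_gt0.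
pose G b := Ls + gamma * \sum_v (w v)%:R * grid_floor a b (latency ends l r sbeta v).
have cost_le_G b : \sum_(1 <= i < (q b).+1)
    layer_cost ends l w r sbeta gamma a b i (sopt b i) <= G b.
  apply: le_trans (sum_layer_cost_le l_ge0 a_gt0 _ sstar _ _ (ltW gamma_gt0)).
  rewrite big_nat_cond [leRHS]big_nat_cond; apply: ler_sum => i /andP[i_range _].
  have [_ sopt_min] := sopt_opt b i i_range; apply/sopt_min/(feasibleW _ fstar).
  by move=> v; rewrite /layer_weights; case: ifP.
have cost_ge0 b : 0 <= \sum_(1 <= i < (q b).+1)
    layer_cost ends l w r sbeta gamma a b i (sopt b i).
  by apply: sumr_ge0 => i _; exact: layer_cost_ge0 (ltW gamma_gt0).
have int_G : (\int[lebesgue_measure]_(b in `[0%R, a]) (G b)%:E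
    <= (Ls * a + gamma * Lb)%:E)%E.
  rewrite /Lb /total_latency sum_weight_gt0.
  apply: integral_affine_grid_floor_le => //.
  - by apply: sumr_ge0 => v _; rewrite mulr_ge0 ?latency_ge0.
  - exact: ltW.
  - exact: latency_ge0.
have int_cost : (\int[lebesgue_measure]_(b in `[0%R, a])
    (\sum_(1 <= i < (q b).+1) layer_cost ends l w r sbeta gamma a b i (sopt b i))%:E
    <= (Ls * a + gamma * Lb)%:E)%E.
  by apply: le_trans int_G; apply: ge0_le_integral_nonmeasurable => b _; rewrite lee_fin.
have ainv_ge0 : (0 <= (a^-1)%:E)%E by rewrite lee_fin invr_ge0 ltW.
apply: le_trans (lee_wpmul2l ainv_ge0 int_cost) _.
by rewrite -EFinM lee_fin mean_cost_le.
Qed.
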